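(* Assume (C1) and (C2). Let $d_0\in(0,+\infty)$. Every Cerami sequence $\{u_k\}\subset\mathcal{D}$ of $I$ at level $d_0$ has at least one subsequence that converges in $\mathcal{D}$. Here a Cerami sequence at level $d_0$ is a sequence with $I(u_k)\to d_0$ and $\|I'(u_k)\|(1+\|u_k\|)\to0$.
   Context: Fix real numbers $p,q,r$ with $1<p<q$, $\frac p2$ a positive integer, and $r\ge1$, and functions $a,b,c:\mathbb{Z}\to(0,+\infty)$. Conditions: - (C1) There is $b_0>0$ with $b(n)\ge b_0$ for all $n$ and $b(n)\to+\infty$ as $|n|\to\infty$. - (C2) There is $c_0>0$ with $c(n)\le c_0$ for all $n$ and $\sum_n c(n)<+\infty$. Notation and spaces: - $\Delta u(n)=u(n+1)-u(n)$. - $E$ is the set of real sequences $u$ with $\|u\|:=\big(\sum_n[a(n)|\Delta u(n)|^p+b(n)|u(n)|^p]\big)^{1/p}<\infty$. - $\mathcal{D}=\{u\in E:\sum_n c(n)|u(n)|^q\ln|u(n)|^r<+\infty\}$, where terms with $u(n)=0$ are read as $0$. It carries the norm $\|\cdot\|$. For $u,v\in\mathcal{D}$: - $I(u)=\frac1p\|u\|^p+\frac{r}{q^2}\sum_n c(n)|u(n)|^q-\frac1q\sum_n c(n)|u(n)|^q\ln|u(n)|^r$. - $\langle I'(u),v\rangle=\sum_n[a(n)|\Delta u(n)|^{p-2}\Delta u(n)\Delta v(n)+b(n)|u(n)|^{p-2}u(n)v(n)]-\sum_n c(n)|u(n)|^{q-2}u(n)v(n)\ln|u(n)|^r$. - $\|I'(u)\|$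 denotes the dual norm $\sup\{|\langle I'(u),v\rangle|:v\in\mathcal{D},\|v\|\le1\}$. *)

From Stdlib Require Import Reals Lra ZArith.
From Coquelicot Require Import Coquelicot.
Open Scope R_scope.

(* real power with the convention x^y = 0 for x <= 0 (we only apply it to |.|) *)
Definition rpow (x y : R) : R := if Rle_dec x 0 then 0 else Rpower x y.

(* sums over Z: split into n >= 0 and n <= -1 *)
Definition posZ (f : Z -> R) : nat -> R := fun n => f (Z.of_nat n).
Definition negZ (f : Z -> R) : nat -> R := fun n => f (- Z.of_nat n - 1)%Z.

Definition summableZ (f : Z -> R) : Prop :=
  ex_series (fun n => Rabs (posZ f n)) /\ ex_series (fun n => Rabs (negZ f n)).

Definition sumZ (f : Z -> R) : R := Series (posZ f) + Series (negZ f).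

Definition Delta (u : Z -> R) (n : Z) : R := u (n + 1)%Z - u n.

Section Space.
Variables (p q r : R) (a b c : Z -> R).

Definition normE_integrand (u : Z -> R) (n : Z) : R :=
  a n * rpow (Rabs (Delta u n)) p + b n * rpow (Rabs (u n)) p.

Definition inE (u : Z -> R) : Prop := summableZ (normE_integrand u).

Definition normE (u : Z -> R) : R := rpow (sumZ (normE_integrand u)) (/ p).

Definition logterm (u : Z -> R) (n : Z) : R :=
  c n * rpow (Rabs (u n)) q * ln (rpow (Rabs (u n)) r).

Definition inD (u : Z -> R) : Prop := inE u /\ summableZ (logterm u).

Definition Ifun (u : Z -> R) : R :=
  / p * rpow (normE u) p
  + r / (q * q) * sumZ (fun n => c n * rpow (Rabs (u n)) q)
  - / q * sumZ (logterm u).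

Definition dI (u v : Z -> R) : R :=
  sumZ (fun n => a n * rpow (Rabs (Delta u n)) (p - 2) * Delta u n * Delta v n
               + b n * rpow (Rabs (u n)) (p - 2) * u n * v n)
  - sumZ (fun n => c n * rpow (Rabs (u n)) (q - 2) * u n * v n
                   * ln (rpow (Rabs (u n)) r)).

Definition dualnorm (u : Z -> R) : Rbar :=
  Lub_Rbar (fun t => exists v, inD v /\ normE v <= 1 /\ t = Rabs (dI u v)).

Definition Cerami_seq (d0 : R) (uk : nat -> Z -> R) : Prop :=
  (forall k, inD (uk k)) /\
  is_lim_seq (fun k => Ifun (uk k)) d0 /\
  (forall eps : R, 0 < eps -> eventually (fun k =>
      Rbar_le (Rbar_mult (dualnorm (uk k)) (1 + normE (uk k))) eps)).
End Space.

Definition cond_C1 (b : Z -> R) : Prop :=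
  (exists b0, 0 < b0 /\ forall n, b0 <= b n) /\
  (forall M : R, exists N : Z, forall n : Z, (N < Z.abs n)%Z -> M < b n).

Definition cond_C2 (c : Z -> R) : Prop :=
  (exists c0, 0 < c0 /\ forall n, c n <= c0) /\ summableZ c.

(* Write ‖u‖^p for the p-th power of the norm (a sum of even powers, as p = 2m) and
   L(u) = Σ c(n) |u(n)|^q ln |u(n)|^r.  Testing I'(u_k) against u_k / (1 + ‖u_k‖^p) gives
   ‖u_k‖^p - L(u_k) = o(1 + ‖u_k‖^p); with I(u_k) -> d0 and p < q this bounds ‖u_k‖.  As b >= b0,
   the u_k are then uniformly bounded pointwise, and a diagonal extraction gives v_k -> w pointwise,
   with w in E by Fatou.  Since c is summable, L(v_k) -> L(w) by dominated convergence, and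
   <I'(v_k), w> -> ‖w‖^p - L(w) (the gradient part is uniformly integrable by Young's
   inequality); the Cerami condition makes this limit 0.  Hence ‖v_k‖^p -> L(w) = ‖w‖^p, and
   generalized dominated convergence with |v_k - w|^p <= 2^p (|v_k|^p + |w|^p) gives
   ‖v_k - w‖ -> 0.  Only b >= b0 > 0 from (C1), the summability of c from (C2) and r >= 0 are
   used. *)

From Stdlib Require Import Reals ZArith Lra Lia ClassicalEpsilon.
From Coquelicot Require Import Coquelicot.
Open Scope R_scope.

(** * Series over the natural numbers *)

Lemma ex_series_Rabs_le (f g : nat -> R) :
  (forall n, Rabs (f n) <= g n) -> ex_series g -> ex_series f.
Proof. intros H Hg. exact (@ex_series_le R_AbsRing R_CompleteNormedModule f g H Hg). Qed.

Lemma ex_series_lin (f g : nat -> R) (al be : R) :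
  ex_series f -> ex_series g -> ex_series (fun n => al * f n + be * g n).
Proof.
  intros Hf Hg.
  apply (ex_series_plus (V := R_NormedModule)); apply (ex_series_scal_l (V := R_NormedModule));
    assumption.
Qed.

Lemma Series_lin (f g : nat -> R) (al be : R) : ex_series f -> ex_series g ->
  Series (fun n => al * f n + be * g n) = al * Series f + be * Series g.
Proof.
  intros Hf Hg. rewrite Series_plus, !Series_scal_l; [reflexivity | |];
    apply (ex_series_scal_l (V := R_NormedModule)); assumption.
Qed.

Lemma Series_zero : Series (fun _ : nat => 0) = 0.
Proof.
  transitivity (Series (fun _ : nat => 0 * 0)); [apply Series_ext; intros; ring |].
  rewrite (Series_scal_l 0 (fun _ => 0)). ring.
Qed.

Lemma Series_nonneg (f : nat -> R) : (forall n, 0 <= f n) -> ex_series f -> 0 <= Series f.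
Proof.
  intros Hf Hs. rewrite <- Series_zero.
  apply Series_le; [intros n; split; [lra | apply Hf] | exact Hs].
Qed.

Lemma sum_f_R0_nonneg (f : nat -> R) (N : nat) : (forall n, 0 <= f n) -> 0 <= sum_f_R0 f N.
Proof. intros Hf. induction N as [|N IH]; simpl; [apply Hf | specialize (Hf (S N)); lra]. Qed.

Lemma is_lim_seq_sum_f_R0 (f : nat -> nat -> R) (g : nat -> R) (N : nat) :
  (forall n, is_lim_seq (fun k => f k n) (g n)) ->
  is_lim_seq (fun k => sum_f_R0 (f k) N) (sum_f_R0 g N).
Proof. intros H. induction N as [|N IH]; simpl; [apply H | now apply is_lim_seq_plus']. Qed.

Definition Series_tail (f : nat -> R) (N : nat) : R := Series (fun j => f (S N + j)%nat).

Lemma Series_split (f : nat -> R) (N : nat) : ex_series f ->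
  Series f = sum_f_R0 f N + Series_tail f N.
Proof. intros Hf. now rewrite (Series_incr_n f (S N)) by (lia || exact Hf). Qed.

Lemma ex_series_tail (f : nat -> R) (N : nat) : ex_series f -> ex_series (fun j => f (S N + j)%nat).
Proof. apply ex_series_incr_n. Qed.

Lemma Series_tail_nonneg (f : nat -> R) (N : nat) :
  (forall n, 0 <= f n) -> ex_series f -> 0 <= Series_tail f N.
Proof. intros Hf Hs. apply Series_nonneg; [intros; apply Hf | now apply ex_series_tail]. Qed.

Lemma Series_tail_le (f : nat -> R) (N : nat) : (forall n, 0 <= f n) -> ex_series f ->
  Series_tail f N <= Series f.
Proof.
  intros Hf Hs. pose proof (sum_f_R0_nonneg f N Hf). rewrite (Series_split f N Hs). lra.
Qed.

Lemma Series_tail_le_compat (f g : nat -> R) (N : nat) :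
  (forall n, 0 <= f n <= g n) -> ex_series g -> Series_tail f N <= Series_tail g N.
Proof. intros H Hg. apply Series_le; [intros; apply H | now apply ex_series_tail]. Qed.

Lemma Series_tail_lin (f g : nat -> R) (al be : R) (N : nat) : ex_series f -> ex_series g ->
  Series_tail (fun n => al * f n + be * g n) N = al * Series_tail f N + be * Series_tail g N.
Proof. intros Hf Hg. apply Series_lin; now apply ex_series_tail. Qed.

Lemma Rabs_Series_tail_le (f : nat -> R) (N : nat) : ex_series (fun n => Rabs (f n)) ->
  Rabs (Series_tail f N) <= Series_tail (fun n => Rabs (f n)) N.
Proof. intros Hf. apply Series_Rabs. now apply ex_series_tail with (f := fun n => Rabs (f n)). Qed.

Lemma is_lim_Series_tail (f : nat -> R) : ex_series f -> is_lim_seq (Series_tail f) 0.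
Proof.
  intros Hs. apply (is_lim_seq_ext (fun N => Series f - sum_f_R0 f N)).
  { intros N. rewrite (Series_split f N Hs). ring. }
  replace (Finite 0) with (Rbar_minus (Series f) (Series f)) by (simpl; f_equal; ring).
  apply is_lim_seq_minus'; [apply is_lim_seq_const |].
  eapply is_lim_seq_ext; [intros n; apply sum_n_Reals | apply Series_correct, Hs].
Qed.

Lemma sum_f_R0_le_Series (f : nat -> R) (N : nat) :
  (forall n, 0 <= f n) -> ex_series f -> sum_f_R0 f N <= Series f.
Proof.
  intros Hf Hs. rewrite (Series_split f N Hs). pose proof (Series_tail_nonneg f N Hf Hs). lra.
Qed.

Lemma Series_term_le (f : nat -> R) (j : nat) :
  (forall n, 0 <= f n) -> ex_series f -> f j <= Series f.
Proof.
  intros Hf Hs. apply Rle_trans with (sum_f_R0 f j); [| now apply sum_f_R0_le_Series].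
  destruct j as [|j]; simpl; [lra |]. pose proof (sum_f_R0_nonneg f j Hf). lra.
Qed.

Lemma is_lim_Series_of_small_tails (f : nat -> nat -> R) (g : nat -> R) :
  (forall n, is_lim_seq (fun k => f k n) (g n)) ->
  (forall k, ex_series (f k)) -> ex_series g ->
  (forall eps, 0 < eps ->
     eventually (fun N => eventually (fun k => Rabs (Series_tail (f k) N) <= eps))) ->
  is_lim_seq (fun k => Series (f k)) (Series g).
Proof.
  intros Hlim Hf Hg Htail. apply is_lim_seq_spec. intros [eps Heps]. simpl.
  assert (He : 0 < eps / 3) by lra.
  pose proof (is_lim_Series_tail g Hg) as Hgt. apply is_lim_seq_spec in Hgt.
  destruct (filter_and _ _ (Htail _ He) (Hgt (mkposreal _ He))) as [N HN].
  destruct (HN N (le_n N)) as [[K0 HK0] HgN]. simpl in HgN. rewrite Rminus_0_r in HgN.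
  pose proof (is_lim_seq_sum_f_R0 f g N Hlim) as Hsum. apply is_lim_seq_spec in Hsum.
  destruct (Hsum (mkposreal _ He)) as [K1 HK1]. simpl in HK1.
  exists (K0 + K1)%nat. intros k Hk.
  specialize (HK0 k ltac:(lia)). specialize (HK1 k ltac:(lia)).
  rewrite (Series_split (f k) N (Hf k)), (Series_split g N Hg).
  revert HK0 HK1 HgN.
  generalize (Series_tail (f k) N), (Series_tail g N), (sum_f_R0 (f k) N), (sum_f_R0 g N).
  intros x y s t. unfold Rabs. repeat destruct Rcase_abs; lra.
Qed.

Lemma Rabs_Series_tail_dominated (f A h : nat -> R) (d C : R) (N : nat) :
  0 <= d -> 0 <= C -> (forall n, 0 <= A n) -> (forall n, 0 <= h n) -> ex_series A -> ex_series h ->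
  (forall n, Rabs (f n) <= d * A n + C * h n) ->
  Rabs (Series_tail f N) <= d * Series A + C * Series_tail h N.
Proof.
  intros Hd HC HA Hh HAs Hhs Hf.
  assert (Hbound : ex_series (fun n => d * A n + C * h n)) by now apply ex_series_lin.
  eapply Rle_trans; [apply Rabs_Series_tail_le |].
  { apply (ex_series_Rabs_le _ (fun n => d * A n + C * h n)); [| exact Hbound].
    intros n. rewrite Rabs_Rabsolu. apply Hf. }
  eapply Rle_trans.
  - apply (Series_tail_le_compat _ (fun n => d * A n + C * h n) N); [| exact Hbound].
    intros n. split; [apply Rabs_pos | apply Hf].
  - rewrite Series_tail_lin by assumption.
    pose proof (Series_tail_le A N HA HAs). nra.
Qed.

Lemma is_lim_Series_unif_integrable (f A : nat -> nat -> R) (g h : nat -> R) (M : R) :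
  (forall n, is_lim_seq (fun k => f k n) (g n)) -> ex_series g ->
  (forall k n, 0 <= A k n) -> (forall k, ex_series (A k)) -> (forall k, Series (A k) <= M) ->
  (forall n, 0 <= h n) -> ex_series h ->
  (forall d, 0 < d -> exists C, forall k n, Rabs (f k n) <= d * A k n + C * h n) ->
  is_lim_seq (fun k => Series (f k)) (Series g).
Proof.
  intros Hlim Hg HA HAs HAM Hh Hhs Hdom.
  assert (Hdom' : forall d, 0 < d ->
            exists C, 0 <= C /\ forall k n, Rabs (f k n) <= d * A k n + C * h n).
  { intros d Hd. destruct (Hdom d Hd) as [C HC]. exists (Rabs C). split; [apply Rabs_pos |].
    intros k n. specialize (HC k n). specialize (Hh n). pose proof (Rle_abs C). nra. }
  apply is_lim_Series_of_small_tails; [exact Hlim | | exact Hg |].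
  { intros k. destruct (Hdom' 1 Rlt_0_1) as [C [_ HC]].
    apply (ex_series_Rabs_le _ (fun n => 1 * A k n + C * h n));
      [apply HC | now apply ex_series_lin]. }
  intros eps Heps.
  set (d := eps / (2 * (Rabs M + 1))).
  assert (Hd : 0 < d) by (apply Rdiv_lt_0_compat; [lra | pose proof (Rabs_pos M); lra]).
  assert (HdM : d * M <= eps / 2).
  { apply Rle_trans with (d * (Rabs M + 1)); [pose proof (Rle_abs M); nra |].
    unfold d. right. field. pose proof (Rabs_pos M); lra. }
  destruct (Hdom' d Hd) as [C [HC0 HC]].
  assert (HCe : 0 < eps / (2 * (C + 1))) by (apply Rdiv_lt_0_compat; lra).
  pose proof (is_lim_Series_tail h Hhs) as Hht. apply is_lim_seq_spec in Hht.
  destruct (Hht (mkposreal _ HCe)) as [N0 HN0]. exists N0. intros N HN. exists O. intros k _.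
  specialize (HN0 N HN). simpl in HN0. rewrite Rminus_0_r, Rabs_pos_eq in HN0
    by now apply Series_tail_nonneg.
  assert (HCh : C * Series_tail h N <= eps / 2).
  { apply Rle_trans with ((C + 1) * (eps / (2 * (C + 1))));
      [pose proof (Series_tail_nonneg h N Hh Hhs); nra |].
    right. field. lra. }
  eapply Rle_trans; [apply (Rabs_Series_tail_dominated _ (A k) h d C); auto; lra |].
  pose proof (HAM k). nra.
Qed.

Lemma is_lim_Series_dominated_by_cvg (D F : nat -> nat -> R) (G : nat -> R) (K : R) :
  0 <= K -> (forall k n, 0 <= D k n) -> (forall k n, D k n <= K * (F k n + G n)) ->
  (forall k, ex_series (F k)) -> ex_series G ->
  (forall n, is_lim_seq (fun k => D k n) 0) ->
  (forall n, is_lim_seq (fun k => F k n) (G n)) ->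
  is_lim_seq (fun k => Series (F k)) (Series G) ->
  is_lim_seq (fun k => Series (D k)) 0.
Proof.
  intros HK HD HDK HF HG HDlim HFlim HSlim.
  assert (HDs : forall k, ex_series (D k)).
  { intros k. apply (ex_series_Rabs_le _ (fun n => K * F k n + K * G n));
      [| now apply ex_series_lin].
    intros n. rewrite Rabs_pos_eq by apply HD. specialize (HDK k n). lra. }
  rewrite <- Series_zero.
  apply is_lim_Series_of_small_tails; [exact HDlim | exact HDs | |].
  { apply (ex_series_Rabs_le _ (fun n => 0 * G n)); [intros; rewrite Rabs_R0; lra |].
    now apply (ex_series_scal_l (V := R_NormedModule)). }
  intros eps Heps.
  set (e := eps / (3 * (K + 1))).
  assert (He : 0 < e) by (apply Rdiv_lt_0_compat; lra).
  pose proof (is_lim_Series_tail G HG) as HGt. apply is_lim_seq_spec in HGt.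
  destruct (HGt (mkposreal e He)) as [N0 HN0]. exists N0. intros N HN.
  specialize (HN0 N HN). simpl in HN0. rewrite Rminus_0_r in HN0.
  assert (HFtail : is_lim_seq (fun k => Series_tail (F k) N) (Series_tail G N)).
  { apply (is_lim_seq_ext (fun k => Series (F k) - sum_f_R0 (F k) N)).
    { intros k. rewrite (Series_split (F k) N (HF k)). ring. }
    replace (Series_tail G N) with (Series G - sum_f_R0 G N)
      by (rewrite (Series_split G N HG); ring).
    apply is_lim_seq_minus'; [exact HSlim | now apply is_lim_seq_sum_f_R0]. }
  apply is_lim_seq_spec in HFtail. destruct (HFtail (mkposreal e He)) as [K0 HK0].
  exists K0. intros k Hk. specialize (HK0 k Hk). simpl in HK0.
  assert (Hbound : Series_tail (D k) N <= K * Series_tail (F k) N + K * Series_tail G N).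
  { rewrite <- Series_tail_lin by auto.
    apply Series_tail_le_compat; [intros j; split; [apply HD | specialize (HDK k j); lra] |].
    now apply ex_series_lin. }
  assert (Hsmall : Series_tail (F k) N + Series_tail G N <= 3 * e).
  { revert HK0 HN0. generalize (Series_tail (F k) N), (Series_tail G N). intros x y.
    unfold Rabs. repeat destruct Rcase_abs; lra. }
  assert (HKe : K * (3 * e) <= eps).
  { apply Rle_trans with ((K + 1) * (3 * e)); [nra |]. right. unfold e. field. lra. }
  rewrite Rabs_pos_eq by (apply Series_tail_nonneg; auto). nra.
Qed.

Lemma ex_series_of_pointwise_lim (F : nat -> nat -> R) (G : nat -> R) (M : R) :
  (forall k n, 0 <= F k n) -> (forall k, ex_series (F k)) -> (forall k, Series (F k) <= M) ->
  (forall n, is_lim_seq (fun k => F k n) (G n)) -> ex_series G.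
Proof.
  intros HF HFs HM Hlim.
  assert (HG : forall n, 0 <= G n).
  { intros n. apply (is_lim_seq_le (fun _ => 0) (fun k => F k n) 0 (G n));
      [intros; apply HF | apply is_lim_seq_const | apply Hlim]. }
  assert (Hsum : forall N, sum_f_R0 G N <= M).
  { intros N. change (Rbar_le (sum_f_R0 G N) M).
    apply (is_lim_seq_le (fun k => sum_f_R0 (F k) N) (fun _ => M));
      [| now apply is_lim_seq_sum_f_R0 | apply is_lim_seq_const].
    intros k. eapply Rle_trans; [apply sum_f_R0_le_Series | apply HM]; auto. }
  apply ex_series_Reals_1. apply growing_cv.
  - intros n. simpl. pose proof (HG (S n)). lra.
  - exists M. intros x [N ->]. apply Hsum.
Qed.

(** * Sums over the integers *)

Definition foldZ (f : Z -> R) (n : nat) : R := posZ f n + negZ f n.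

Lemma foldZ_nonneg (f : Z -> R) : (forall n, 0 <= f n) -> forall j, 0 <= foldZ f j.
Proof.
  intros Hf j. unfold foldZ, posZ, negZ.
  pose proof (Hf (Z.of_nat j)); pose proof (Hf (- Z.of_nat j - 1)%Z); lra.
Qed.

Lemma summableZ_le (f g : Z -> R) :
  (forall n, Rabs (f n) <= g n) -> summableZ g -> summableZ f.
Proof.
  intros H [Hpos Hneg]. split;
    [apply (ex_series_Rabs_le _ (fun n => Rabs (posZ g n))) |
     apply (ex_series_Rabs_le _ (fun n => Rabs (negZ g n)))]; try assumption;
    intros n; rewrite Rabs_Rabsolu; eapply Rle_trans;
    [apply H | apply Rle_abs | apply H | apply Rle_abs].
Qed.

Lemma summableZ_lin (f g : Z -> R) (al be : R) : summableZ f -> summableZ g ->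
  summableZ (fun n => al * f n + be * g n).
Proof.
  intros [Hf1 Hf2] [Hg1 Hg2]. split;
    [apply (ex_series_Rabs_le _ (fun n => Rabs al * Rabs (posZ f n) + Rabs be * Rabs (posZ g n))) |
     apply (ex_series_Rabs_le _ (fun n => Rabs al * Rabs (negZ f n) + Rabs be * Rabs (negZ g n)))];
    try (now apply ex_series_lin);
    intros n; rewrite Rabs_Rabsolu; unfold posZ, negZ;
    eapply Rle_trans; try apply Rabs_triang; rewrite !Rabs_mult; lra.
Qed.

Lemma summableZ_ext (f g : Z -> R) : (forall n, f n = g n) -> summableZ f -> summableZ g.
Proof.
  intros H [Hpos Hneg]. unfold summableZ, posZ, negZ in *.
  split; [revert Hpos | revert Hneg]; apply ex_series_ext; intros n; now rewrite H.
Qed.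

Lemma summableZ_scal (f : Z -> R) (t : R) : summableZ f -> summableZ (fun n => t * f n).
Proof.
  intros Hf. apply (summableZ_ext (fun n => t * f n + 0 * f n)); [intros; ring |].
  now apply summableZ_lin.
Qed.

Lemma sumZ_ext (f g : Z -> R) : (forall n, f n = g n) -> sumZ f = sumZ g.
Proof. intros H. unfold sumZ, posZ, negZ. f_equal; apply Series_ext; intros; apply H. Qed.

Lemma sumZ_scal (f : Z -> R) (t : R) : sumZ (fun n => t * f n) = t * sumZ f.
Proof. unfold sumZ, posZ, negZ. rewrite !Series_scal_l. ring. Qed.

Lemma summableZ_foldZ (f : Z -> R) : summableZ f ->
  ex_series (foldZ f) /\ sumZ f = Series (foldZ f).
Proof.
  intros [Hpos Hneg]. apply ex_series_Rabs in Hpos, Hneg. split.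
  - exact (ex_series_plus (V := R_NormedModule) _ _ Hpos Hneg).
  - unfold foldZ, sumZ. rewrite (Series_plus (posZ f) (negZ f)); easy.
Qed.

Lemma summableZ_of_foldZ (f : Z -> R) :
  (forall n, 0 <= f n) -> ex_series (foldZ f) -> summableZ f.
Proof.
  intros Hf Hs. split; apply (ex_series_Rabs_le _ (foldZ f)); try exact Hs;
    intros n; rewrite Rabs_Rabsolu, Rabs_pos_eq by apply Hf; unfold foldZ, posZ, negZ;
    pose proof (Hf (Z.of_nat n)); pose proof (Hf (- Z.of_nat n - 1)%Z); lra.
Qed.

Lemma sumZ_nonneg (f : Z -> R) : (forall n, 0 <= f n) -> summableZ f -> 0 <= sumZ f.
Proof.
  intros Hf Hs. destruct (summableZ_foldZ f Hs) as [Hex ->].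
  apply Series_nonneg; [now apply foldZ_nonneg | exact Hex].
Qed.

Lemma sumZ_term_le (f : Z -> R) (n : Z) : (forall n, 0 <= f n) -> summableZ f -> f n <= sumZ f.
Proof.
  intros Hf Hs. destruct (summableZ_foldZ f Hs) as [Hex ->].
  pose proof (foldZ_nonneg f Hf) as Hfold.
  destruct (Z_le_gt_dec 0 n) as [Hn | Hn].
  - eapply Rle_trans; [| apply (Series_term_le _ (Z.to_nat n) Hfold Hex)].
    unfold foldZ, posZ, negZ. rewrite Z2Nat.id by exact Hn.
    pose proof (Hf (- n - 1)%Z). lra.
  - eapply Rle_trans; [| apply (Series_term_le _ (Z.to_nat (- n - 1)) Hfold Hex)].
    unfold foldZ, posZ, negZ. rewrite Z2Nat.id by lia. replace (- (- n - 1) - 1)%Z with n by ring.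
    pose proof (Hf (- n - 1)%Z). lra.
Qed.

Lemma is_lim_seq_foldZ (f : nat -> Z -> R) (g : Z -> R) :
  (forall n, is_lim_seq (fun k => f k n) (g n)) ->
  forall j, is_lim_seq (fun k => foldZ (f k) j) (foldZ g j).
Proof. intros H j. apply is_lim_seq_plus'; apply H. Qed.

Lemma summableZ_of_pointwise_lim (F : nat -> Z -> R) (G : Z -> R) (M : R) :
  (forall k n, 0 <= F k n) -> (forall k, summableZ (F k)) -> (forall k, sumZ (F k) <= M) ->
  (forall n, is_lim_seq (fun k => F k n) (G n)) -> summableZ G.
Proof.
  intros HF HFs HM Hlim. apply summableZ_of_foldZ.
  - intros n. apply (is_lim_seq_le (fun _ => 0) (fun k => F k n) 0 (G n));
      [intros; apply HF | apply is_lim_seq_const | apply Hlim].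
  - apply (ex_series_of_pointwise_lim (fun k => foldZ (F k)) _ M).
    + intros k. apply foldZ_nonneg, HF.
    + intros k. apply summableZ_foldZ, HFs.
    + intros k. rewrite <- (proj2 (summableZ_foldZ _ (HFs k))). apply HM.
    + now apply is_lim_seq_foldZ.
Qed.

Lemma is_lim_sumZ_unif_integrable (f A : nat -> Z -> R) (g h : Z -> R) (M : R) :
  (forall n, is_lim_seq (fun k => f k n) (g n)) -> summableZ g ->
  (forall k n, 0 <= A k n) -> (forall k, summableZ (A k)) -> (forall k, sumZ (A k) <= M) ->
  (forall n, 0 <= h n) -> summableZ h ->
  (forall d, 0 < d -> exists C, forall k n, Rabs (f k n) <= d * A k n + C * h n) ->
  is_lim_seq (fun k => sumZ (f k)) (sumZ g).
Proof.
  intros Hlim Hg HA HAs HAM Hh Hhs Hdom.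
  assert (Hfs : forall k, summableZ (f k)).
  { intros k. destruct (Hdom 1 Rlt_0_1) as [C HC].
    apply (summableZ_le _ (fun n => 1 * A k n + C * h n)); [apply HC | now apply summableZ_lin]. }
  apply (is_lim_seq_ext (fun k => Series (foldZ (f k)))).
  { intros k. symmetry. apply summableZ_foldZ, Hfs. }
  rewrite (proj2 (summableZ_foldZ g Hg)).
  apply (is_lim_Series_unif_integrable _ (fun k => foldZ (A k)) _ (foldZ h) M).
  - now apply is_lim_seq_foldZ.
  - apply summableZ_foldZ, Hg.
  - intros k. apply foldZ_nonneg, HA.
  - intros k. apply summableZ_foldZ, HAs.
  - intros k. rewrite <- (proj2 (summableZ_foldZ _ (HAs k))). apply HAM.
  - now apply foldZ_nonneg.
  - apply summableZ_foldZ, Hhs.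
  - intros d Hd. destruct (Hdom d Hd) as [C HC]. exists C. intros k j. unfold foldZ, posZ, negZ.
    eapply Rle_trans; [apply Rabs_triang |].
    pose proof (HC k (Z.of_nat j)). pose proof (HC k (- Z.of_nat j - 1)%Z). lra.
Qed.

Lemma is_lim_sumZ_dominated (f : nat -> Z -> R) (g h : Z -> R) :
  (forall n, is_lim_seq (fun k => f k n) (g n)) -> summableZ g -> summableZ h ->
  (forall k n, Rabs (f k n) <= h n) ->
  is_lim_seq (fun k => sumZ (f k)) (sumZ g).
Proof.
  intros Hlim Hg Hh Hdom.
  assert (Hh0 : forall n, 0 <= h n)
    by (intros n; eapply Rle_trans; [apply Rabs_pos | apply (Hdom O)]).
  apply (is_lim_sumZ_unif_integrable f (fun _ => h) g h (sumZ h)); auto using Rle_refl.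
  intros d Hd. exists 1. intros k n. specialize (Hdom k n). specialize (Hh0 n). nra.
Qed.

Lemma is_lim_sumZ_dominated_by_cvg (D F : nat -> Z -> R) (G : Z -> R) (K : R) :
  0 <= K -> (forall k n, 0 <= D k n) -> (forall k n, D k n <= K * (F k n + G n)) ->
  (forall k, summableZ (F k)) -> summableZ G ->
  (forall n, is_lim_seq (fun k => D k n) 0) ->
  (forall n, is_lim_seq (fun k => F k n) (G n)) ->
  is_lim_seq (fun k => sumZ (F k)) (sumZ G) ->
  is_lim_seq (fun k => sumZ (D k)) 0.
Proof.
  intros HK HD HDK HF HG HDlim HFlim HSlim.
  assert (HDs : forall k, summableZ (D k)).
  { intros k. apply (summableZ_le _ (fun n => K * F k n + K * G n)); [|now apply summableZ_lin].
    intros n. rewrite Rabs_pos_eq by apply HD. specialize (HDK k n). lra. }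
  apply (is_lim_seq_ext (fun k => Series (foldZ (D k)))).
  { intros k. symmetry. apply summableZ_foldZ, HDs. }
  apply (is_lim_Series_dominated_by_cvg _ (fun k => foldZ (F k)) (foldZ G) K HK).
  - intros k. apply foldZ_nonneg, HD.
  - intros k j. unfold foldZ, posZ, negZ. pose proof (HDK k (Z.of_nat j)).
    pose proof (HDK k (- Z.of_nat j - 1)%Z). lra.
  - intros k. apply summableZ_foldZ, HF.
  - apply summableZ_foldZ, HG.
  - intros j. replace (Finite 0) with (Rbar_plus 0 0) by (simpl; f_equal; ring).
    apply is_lim_seq_plus'; apply HDlim.
  - now apply is_lim_seq_foldZ.
  - apply (is_lim_seq_ext (fun k => sumZ (F k))); [intros k; apply summableZ_foldZ, HF |].
    rewrite <- (proj2 (summableZ_foldZ G HG)). exact HSlim.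
Qed.

(** * Subsequences and diagonal extraction *)

Lemma bounded_of_eventually_bounded (x : nat -> R) (M0 : R) :
  eventually (fun k => x k <= M0) -> exists M, forall k, x k <= M.
Proof.
  intros [N HN].
  assert (Hinit : forall N', exists M, forall k, (k < N')%nat -> x k <= M).
  { induction N' as [|N' [M HM]]; [exists 0; intros; lia |].
    exists (Rmax M (x N')). intros k Hk. destruct (Nat.eq_dec k N') as [-> | Hne];
      [apply Rmax_r | eapply Rle_trans; [apply HM; lia | apply Rmax_l]]. }
  destruct (Hinit N) as [M HM]. exists (Rmax M M0). intros k.
  destruct (le_lt_dec N k) as [Hk | Hk].
  - eapply Rle_trans; [now apply HN | apply Rmax_r].
  - eapply Rle_trans; [now apply HM | apply Rmax_l].
Qed.

Definition strictly_increasing (phi : nat -> nat) : Prop := forall k, (phi k < phi (S k))%nat.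

Lemma strictly_increasing_le (phi : nat -> nat) : strictly_increasing phi ->
  forall k k', (k <= k')%nat -> (phi k <= phi k')%nat.
Proof. intros H k k' Hk. induction Hk as [|k' _ IH]; [lia | specialize (H k'); lia]. Qed.

Lemma strictly_increasing_ge_id (phi : nat -> nat) : strictly_increasing phi ->
  forall k, (k <= phi k)%nat.
Proof. intros H k. induction k as [|k IH]; [lia | specialize (H k); lia]. Qed.

Lemma strictly_increasing_comp (phi psi : nat -> nat) :
  strictly_increasing phi -> strictly_increasing psi -> strictly_increasing (fun k => phi (psi k)).
Proof.
  intros Hphi Hpsi k. specialize (Hpsi k).
  pose proof (strictly_increasing_le phi Hphi _ _ Hpsi). specialize (Hphi (psi k)). lia.
Qed.

Lemma is_lim_seq_of_late_terms (y z : nat -> R) (L : R) (j : nat) : is_lim_seq y L ->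
  (forall k, (j <= k)%nat -> exists i, (k <= i)%nat /\ z k = y i) -> is_lim_seq z L.
Proof.
  intros Hy Hz. apply is_lim_seq_spec in Hy. apply is_lim_seq_spec. intros eps.
  destruct (Hy eps) as [N HN]. exists (N + j)%nat. intros k Hk.
  destruct (Hz k ltac:(lia)) as [i [Hi ->]]. apply HN. lia.
Qed.

Lemma cluster_point_subseq (x : nat -> R) (L : R) :
  (forall eps, 0 < eps -> forall N, exists n, (N <= n)%nat /\ Rabs (x n - L) < eps) ->
  exists phi, strictly_increasing phi /\ is_lim_seq (fun k => x (phi k)) L.
Proof.
  intros HL.
  destruct (choice (fun (jN : nat * nat) n =>
                      (snd jN <= n)%nat /\ Rabs (x n - L) < / INR (S (fst jN))))
    as [pick Hpick].
  { intros [j N]. apply HL. apply Rinv_0_lt_compat, lt_0_INR. lia. }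
  set (phi := nat_rect (fun _ => nat) (pick (O, O)) (fun k pk => pick (S k, S pk))).
  assert (Hclose : forall k, Rabs (x (phi k) - L) < / INR (S k)).
  { intros [|k]; [apply (Hpick (O, O)) | apply (Hpick (S k, S (phi k)))]. }
  exists phi. split.
  - intros k. apply (Hpick (S k, S (phi k))).
  - apply is_lim_seq_spec. intros eps.
    destruct (archimed_cor1 eps (cond_pos eps)) as [N [HN HN0]].
    exists N. intros k Hk. eapply Rlt_trans; [apply Hclose |].
    eapply Rle_lt_trans; [| exact HN].
    apply Rinv_le_contravar; [apply lt_0_INR; lia | apply le_INR; lia].
Qed.

Lemma bounded_seq_cvg_subseq (x : nat -> R) (B : R) : (forall k, Rabs (x k) <= B) ->
  exists phi, strictly_increasing phi /\ ex_finite_lim_seq (fun k => x (phi k)).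
Proof.
  intros HB.
  destruct (Bolzano_Weierstrass x _ (compact_P3 (- B) B)) as [L HL].
  { intros k. now apply Rabs_le_between. }
  destruct (cluster_point_subseq x L) as [phi [Hphi Hlim]].
  - intros eps Heps N. apply (HL (disc L (mkposreal eps Heps)) N).
    now exists (mkposreal eps Heps).
  - exists phi. split; [exact Hphi | now exists L].
Qed.

(* An arbitrary sequence when no convergent extraction exists, e.g. for unbounded [y]. *)
Definition cvg_extraction (y : nat -> R) : nat -> nat :=
  epsilon (inhabits (fun k => k))
    (fun phi => strictly_increasing phi /\ ex_finite_lim_seq (fun k => y (phi k))).

Fixpoint nested_extraction (x : nat -> nat -> R) (j : nat) : nat -> nat :=
  match j with
  | O => cvg_extraction (x O)
  | S j' =>
      let psi := nested_extraction x j' in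
      fun k => psi (cvg_extraction (fun i => x j (psi i)) k)
  end.

Section Diagonal.
Variables (x : nat -> nat -> R) (B : R).
Hypothesis HB : forall j k, Rabs (x j k) <= B.

Lemma cvg_extraction_spec (y : nat -> R) : (forall k, Rabs (y k) <= B) ->
  strictly_increasing (cvg_extraction y) /\ ex_finite_lim_seq (fun k => y (cvg_extraction y k)).
Proof.
  intros Hy. unfold cvg_extraction. apply epsilon_spec. now apply (bounded_seq_cvg_subseq y B).
Qed.

Lemma nested_extraction_incr (j : nat) : strictly_increasing (nested_extraction x j).
Proof.
  induction j as [|j IH]; simpl; [| apply strictly_increasing_comp; [exact IH |]];
    apply cvg_extraction_spec; intros; apply HB.
Qed.

Lemma nested_extraction_cvg (j : nat) :
  ex_finite_lim_seq (fun k => x j (nested_extraction x j k)).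
Proof.
  destruct j as [|j]; simpl;
    [apply (proj2 (cvg_extraction_spec (x O) (HB O))) |
     apply (proj2 (cvg_extraction_spec (fun i => x (S j) (nested_extraction x j i))
                     (fun i => HB (S j) _)))].
Qed.

Lemma nested_extraction_refines (j d k : nat) :
  exists i, (k <= i)%nat /\ nested_extraction x (d + j) k = nested_extraction x j i.
Proof.
  revert k. induction d as [|d IH]; intros k; [now exists k |].
  simpl. set (sel := cvg_extraction _).
  destruct (IH (sel k)) as [i [Hi ->]]. exists i. split; [| reflexivity].
  enough (k <= sel k)%nat by lia.
  apply strictly_increasing_ge_id, cvg_extraction_spec. intros; apply HB.
Qed.

Lemma diagonal_extraction : exists phi, strictly_increasing phi /\
  forall j, ex_finite_lim_seq (fun k => x j (phi k)).
Proof.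
  exists (fun k => nested_extraction x k k). split.
  - intros k. simpl.
    destruct (cvg_extraction_spec (fun i => x (S k) (nested_extraction x k i))) as [Hsel _];
      [intros; apply HB |].
    pose proof (strictly_increasing_ge_id _ Hsel (S k)) as Hge.
    pose proof (strictly_increasing_le _ (nested_extraction_incr k) _ _ Hge).
    pose proof (nested_extraction_incr k k). lia.
  - intros j. destruct (nested_extraction_cvg j) as [L HL]. exists L.
    apply (is_lim_seq_of_late_terms _ _ L j HL). intros k Hk.
    destruct (nested_extraction_refines j (k - j) k) as [i [Hi Heq]].
    exists i. split; [exact Hi |]. replace (k - j + j)%nat with k in Heq by lia. now rewrite Heq.
Qed.

End Diagonal.

Definition nat_to_Z (j : nat) : Z :=
  if Nat.even j then Z.of_nat (Nat.div2 j) else (- Z.of_nat (Nat.div2 j) - 1)%Z.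

Lemma nat_to_Z_surj (n : Z) : exists j, nat_to_Z j = n.
Proof.
  unfold nat_to_Z. destruct (Z_le_gt_dec 0 n) as [Hn | Hn].
  - exists (2 * Z.to_nat n)%nat. rewrite Nat.even_mul, Nat.div2_double. simpl. lia.
  - exists (S (2 * Z.to_nat (- n - 1)))%nat.
    rewrite Nat.even_succ, Nat.odd_mul, Nat.div2_succ_double. simpl. lia.
Qed.

Lemma pointwise_cvg_subseq (u : nat -> Z -> R) (B : R) : (forall k n, Rabs (u k n) <= B) ->
  exists phi (w : Z -> R), strictly_increasing phi /\
    forall n, is_lim_seq (fun k => u (phi k) n) (w n).
Proof.
  intros HB.
  destruct (diagonal_extraction (fun j k => u k (nat_to_Z j)) B) as [phi [Hphi Hlim]];
    [intros; apply HB |].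
  exists phi, (fun n => real (Lim_seq (fun k => u (phi k) n))). split; [exact Hphi |].
  intros n. destruct (nat_to_Z_surj n) as [j <-].
  destruct (Hlim j) as [L HL]. now rewrite (is_lim_seq_unique _ _ HL).
Qed.

(** * Elementary real inequalities and limits *)

Lemma pow_pred_mul (x : R) (n : nat) : (0 < n)%nat -> x ^ (n - 1) * x = x ^ n.
Proof. intros Hn. replace n with (S (n - 1)) at 2 by lia. simpl. ring. Qed.

Lemma pow_even_abs (x : R) (m : nat) : Rabs x ^ (2 * m) = x ^ (2 * m).
Proof. rewrite !pow_mult. f_equal. apply pow2_abs. Qed.

Lemma pow_even_nonneg (x : R) (m : nat) : 0 <= x ^ (2 * m).
Proof. rewrite <- pow_even_abs. apply pow_le, Rabs_pos. Qed.

Lemma Rabs_le_1_plus_pow (x : R) (n : nat) : (0 < n)%nat -> Rabs x <= 1 + Rabs x ^ n.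
Proof.
  intros Hn. pose proof (pow_le (Rabs x) n (Rabs_pos x)).
  destruct (Rle_dec (Rabs x) 1) as [Hx | Hx]; [lra |].
  rewrite <- (pow_pred_mul _ n Hn). pose proof (pow_R1_Rle (Rabs x) (n - 1) ltac:(lra)). nra.
Qed.

Lemma pow_le_self (t : R) (n : nat) : 0 <= t <= 1 -> (0 < n)%nat -> t ^ n <= t.
Proof.
  intros Ht Hn. rewrite <- (pow_pred_mul t n Hn).
  assert (t ^ (n - 1) <= 1) by (rewrite <- (pow1 (n - 1)); apply pow_incr; lra).
  pose proof (pow_le t (n - 1) (proj1 Ht)). nra.
Qed.

Lemma young_pow (s t d : R) (n : nat) : 0 < d -> (0 < n)%nat ->
  Rabs s ^ (n - 1) * Rabs t <= d * Rabs s ^ n + (/ d) ^ (n - 1) * Rabs t ^ n.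
Proof.
  intros Hd Hn. set (x := Rabs s). set (y := Rabs t).
  assert (Hx : 0 <= x) by apply Rabs_pos. assert (Hy : 0 <= y) by apply Rabs_pos.
  assert (P1 : 0 <= (/ d) ^ (n - 1) * y ^ n)
    by (apply Rmult_le_pos; apply pow_le; [left; now apply Rinv_0_lt_compat | exact Hy]).
  assert (P2 : 0 <= d * x ^ n) by (apply Rmult_le_pos; [lra | now apply pow_le]).
  destruct (Rle_dec y (d * x)) as [Hyx | Hyx].
  - apply Rle_trans with (x ^ (n - 1) * (d * x)).
    + apply Rmult_le_compat_l; [now apply pow_le | exact Hyx].
    + rewrite <- (pow_pred_mul x n Hn). lra.
  - assert (Hxy : x <= y / d) by (apply Rmult_le_reg_r with d; [exact Hd | field_simplify; lra]).
    apply Rle_trans with ((y / d) ^ (n - 1) * y).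
    + apply Rmult_le_compat_r; [exact Hy | apply pow_incr; lra].
    + unfold Rdiv. rewrite Rpow_mult_distr, <- (pow_pred_mul y n Hn). lra.
Qed.

Lemma young_pow_pair (al be s1 t1 s2 t2 d : R) (m : nat) :
  0 <= al -> 0 <= be -> 0 < d -> (0 < m)%nat ->
  Rabs (al * s1 ^ (2 * m - 1) * t1 + be * s2 ^ (2 * m - 1) * t2) <=
  d * (al * s1 ^ (2 * m) + be * s2 ^ (2 * m)) +
  (/ d) ^ (2 * m - 1) * (al * t1 ^ (2 * m) + be * t2 ^ (2 * m)).
Proof.
  intros Hal Hbe Hd Hm.
  pose proof (young_pow s1 t1 d (2 * m) Hd ltac:(lia)) as H1.
  pose proof (young_pow s2 t2 d (2 * m) Hd ltac:(lia)) as H2.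
  rewrite !pow_even_abs in H1, H2.
  eapply Rle_trans; [apply Rabs_triang |].
  rewrite !Rabs_mult, <- !RPow_abs, (Rabs_pos_eq al), (Rabs_pos_eq be) by assumption.
  rewrite !Rmult_assoc.
  apply Rle_trans with (al * (d * s1 ^ (2 * m) + (/ d) ^ (2 * m - 1) * t1 ^ (2 * m)) +
                        be * (d * s2 ^ (2 * m) + (/ d) ^ (2 * m - 1) * t2 ^ (2 * m)));
    [| right; ring].
  apply Rplus_le_compat; apply Rmult_le_compat_l; assumption.
Qed.

Lemma pow_even_sub_le (s t : R) (m : nat) :
  (s - t) ^ (2 * m) <= 2 ^ (2 * m) * (s ^ (2 * m) + t ^ (2 * m)).
Proof.
  rewrite <- (pow_even_abs (s - t)), <- (pow_even_abs s), <- (pow_even_abs t).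
  set (M := Rmax (Rabs s) (Rabs t)).
  assert (HM : Rabs (s - t) <= 2 * M).
  { unfold M, Rminus. eapply Rle_trans; [apply Rabs_triang |]. rewrite Rabs_Ropp.
    pose proof (Rmax_l (Rabs s) (Rabs t)). pose proof (Rmax_r (Rabs s) (Rabs t)). lra. }
  apply Rle_trans with ((2 * M) ^ (2 * m)); [apply pow_incr; split; [apply Rabs_pos | exact HM] |].
  rewrite Rpow_mult_distr. apply Rmult_le_compat_l; [apply pow_le; lra |].
  pose proof (pow_le (Rabs s) (2 * m) (Rabs_pos _)).
  pose proof (pow_le (Rabs t) (2 * m) (Rabs_pos _)).
  unfold M, Rmax. destruct Rle_dec; lra.
Qed.

Lemma is_lim_seq_pow (x : nat -> R) (l : R) (n : nat) :
  is_lim_seq x l -> is_lim_seq (fun k => x k ^ n) (l ^ n).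
Proof.
  intros H. induction n as [|n IH]; simpl; [apply is_lim_seq_const | now apply is_lim_seq_mult'].
Qed.

Lemma ln_le_sub_1 (y : R) : 0 < y -> ln y <= y - 1.
Proof. intros Hy. pose proof (exp_ineq1_le (ln y)) as H. rewrite exp_ln in H by exact Hy. lra. Qed.

Lemma mul_Rabs_ln_le_1 (y : R) : 0 < y <= 1 -> y * Rabs (ln y) <= 1.
Proof.
  intros [Hy0 Hy1]. assert (Hln : ln y <= 0) by (rewrite <- ln_1; apply ln_le; lra).
  rewrite Rabs_left1 by exact Hln.
  pose proof (ln_le_sub_1 (/ y) (Rinv_0_lt_compat _ Hy0)) as H. rewrite ln_Rinv in H by exact Hy0.
  assert (Hmul : y * - ln y <= y * (/ y - 1)) by (apply Rmult_le_compat_l; lra).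
  rewrite Rmult_minus_distr_l, Rinv_r in Hmul by lra. lra.
Qed.

Lemma Rpower_le_self (y s : R) : 0 < y <= 1 -> 1 <= s -> Rpower y s <= y.
Proof.
  intros [Hy0 Hy1] Hs. replace s with ((s - 1) + 1) by ring.
  rewrite Rpower_plus, Rpower_1 by exact Hy0.
  assert (Rpower y (s - 1) <= 1).
  { replace 1 with (Rpower 1 (s - 1)) at 2 by (unfold Rpower; rewrite ln_1, Rmult_0_r; apply exp_0).
    apply Rle_Rpower_l; lra. }
  pose proof (exp_pos ((s - 1) * ln y)). unfold Rpower in *. nra.
Qed.

Lemma Rpower_mul_Rabs_ln_le (s y B : R) : 1 <= s -> 0 < y <= B ->
  Rpower y s * Rabs (ln y) <= 1 + Rpower B s * B.
Proof.
  intros Hs [Hy HyB].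
  assert (0 <= Rpower B s * B) by (pose proof (exp_pos (s * ln B)); unfold Rpower; nra).
  pose proof (Rabs_pos (ln y)). pose proof (exp_pos (s * ln y)) as Hpow; fold (Rpower y s) in Hpow.
  destruct (Rle_dec y 1) as [Hy1 | Hy1].
  - pose proof (Rpower_le_self y s (conj Hy Hy1) Hs). pose proof (mul_Rabs_ln_le_1 y (conj Hy Hy1)).
    assert (Rpower y s * Rabs (ln y) <= y * Rabs (ln y)) by (apply Rmult_le_compat_r; lra). lra.
  - assert (0 <= ln y) by (rewrite <- ln_1; apply ln_le; lra).
    rewrite Rabs_right by lra. pose proof (ln_le_sub_1 y Hy).
    assert (Rpower y s <= Rpower B s) by (apply Rle_Rpower_l; lra).
    assert (Rpower y s * ln y <= Rpower B s * B) by (apply Rmult_le_compat; lra). lra.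
Qed.

Lemma is_lim_seq_ln (y : nat -> R) (L : R) : 0 < L -> is_lim_seq y L ->
  is_lim_seq (fun k => ln (y k)) (ln L).
Proof.
  intros HL H. apply is_lim_seq_continuous; [| exact H].
  apply derivable_continuous_pt. exists (/ L). now apply derivable_pt_lim_ln.
Qed.

Lemma is_lim_seq_Rpower (y : nat -> R) (L s : R) : 0 < L -> is_lim_seq y L ->
  is_lim_seq (fun k => Rpower (y k) s) (Rpower L s).
Proof.
  intros HL H. unfold Rpower. apply is_lim_seq_continuous.
  - apply derivable_continuous_pt, derivable_pt_exp.
  - apply (is_lim_seq_scal_l _ s (ln L)). now apply is_lim_seq_ln.
Qed.

(** * Real powers and the logarithmic coefficient *)

Lemma rpow_nonneg (x y : R) : 0 <= rpow x y.
Proof. unfold rpow. destruct Rle_dec; [lra | left; apply exp_pos]. Qed.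

Lemma rpow_pos_eq (x y : R) : 0 < x -> rpow x y = Rpower x y.
Proof. intros Hx. unfold rpow. destruct Rle_dec; [lra | reflexivity]. Qed.

Lemma rpow_Rabs_0 (y : R) : rpow (Rabs 0) y = 0.
Proof. unfold rpow. rewrite Rabs_R0. destruct Rle_dec; [reflexivity | lra]. Qed.

Lemma rpow_Rabs_even (m : nat) (x : R) : (0 < m)%nat -> rpow (Rabs x) (INR (2 * m)) = x ^ (2 * m).
Proof.
  intros Hm. destruct (Req_dec x 0) as [-> | Hx].
  - rewrite rpow_Rabs_0, pow_i by lia. reflexivity.
  - rewrite rpow_pos_eq, Rpower_pow by now apply Rabs_pos_lt. apply pow_even_abs.
Qed.

Lemma rpow_Rabs_even_sub_2 (m : nat) (x : R) : (0 < m)%nat ->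
  rpow (Rabs x) (INR (2 * m) - 2) * x = x ^ (2 * m - 1).
Proof.
  intros Hm. destruct (Req_dec x 0) as [-> | Hx].
  - rewrite Rmult_0_r, pow_i by lia. reflexivity.
  - replace (INR (2 * m) - 2) with (INR (2 * (m - 1)))
      by (replace (2 * m)%nat with (2 * (m - 1) + 2)%nat by lia; rewrite plus_INR; simpl; ring).
    rewrite rpow_pos_eq, Rpower_pow, pow_even_abs by now apply Rabs_pos_lt.
    replace (2 * m - 1)%nat with (S (2 * (m - 1))) by lia. simpl. ring.
Qed.

Lemma rpow_inv_le_1 (p S : R) : 0 < p -> S <= 1 -> rpow S (/ p) <= 1.
Proof.
  intros Hp HS. unfold rpow. destruct Rle_dec as [| HS0]; [lra |].
  replace 1 with (Rpower 1 (/ p)) by (unfold Rpower; rewrite ln_1, Rmult_0_r; apply exp_0).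
  apply Rle_Rpower_l; [left; now apply Rinv_0_lt_compat | lra].
Qed.

Lemma rpow_rpow_inv (p S : R) : 0 < p -> 0 <= S -> rpow (rpow S (/ p)) p = S.
Proof.
  intros Hp HS. unfold rpow at 2. destruct Rle_dec as [HS0 | HS0].
  - replace S with 0 by lra. unfold rpow. destruct Rle_dec; lra.
  - rewrite rpow_pos_eq by apply exp_pos.
    rewrite Rpower_mult, Rinv_l, Rpower_1 by lra. reflexivity.
Qed.

Lemma is_lim_seq_rpow_inv_0 (x : nat -> R) (p : R) : 0 < p -> (forall k, 0 <= x k) ->
  is_lim_seq x 0 -> is_lim_seq (fun k => rpow (x k) (/ p)) 0.
Proof.
  intros Hp Hx H. apply is_lim_seq_spec in H. apply is_lim_seq_spec. intros [eps Heps].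
  destruct (H (mkposreal (Rpower eps p) (exp_pos _))) as [N HN]. exists N. intros k Hk.
  specialize (HN k Hk). simpl in *. rewrite Rminus_0_r in *.
  rewrite Rabs_pos_eq in HN by apply Hx. rewrite Rabs_pos_eq by apply rpow_nonneg.
  unfold rpow. destruct Rle_dec; [lra |].
  replace eps with (Rpower (Rpower eps p) (/ p))
    by (rewrite Rpower_mult, Rinv_r, Rpower_1 by lra; reflexivity).
  apply Rlt_Rpower_l; [now apply Rinv_0_lt_compat | lra].
Qed.

(* The logarithmic part of <I'(u), v> has integrand c(n) * logcoef q r (u n) * v n. *)
Definition logcoef (q r x : R) : R := rpow (Rabs x) (q - 2) * x * ln (rpow (Rabs x) r).

Lemma logcoef_nonzero (q r x : R) : x <> 0 ->
  logcoef q r x = Rpower (Rabs x) (q - 2) * x * (r * ln (Rabs x)).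
Proof.
  intros Hx. unfold logcoef. rewrite !rpow_pos_eq by now apply Rabs_pos_lt.
  now rewrite ln_Rpower.
Qed.

Lemma logcoef_mul_self (q r x : R) :
  logcoef q r x * x = rpow (Rabs x) q * ln (rpow (Rabs x) r).
Proof.
  destruct (Req_dec x 0) as [-> | Hx]; [rewrite rpow_Rabs_0; unfold logcoef; ring |].
  unfold logcoef. rewrite !(rpow_pos_eq (Rabs x)) by now apply Rabs_pos_lt.
  replace q with ((q - 2) + 2) at 2 by ring. rewrite Rpower_plus by now apply Rabs_pos_lt.
  replace (Rpower (Rabs x) 2) with (x * x).
  - ring.
  - replace 2 with (INR 2) by (simpl; ring). rewrite Rpower_pow by now apply Rabs_pos_lt.
    rewrite pow2_abs. ring.
Qed.

Lemma logcoef_bound (q r B x : R) : 2 <= q -> 0 <= r -> 1 <= B -> Rabs x <= B ->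
  Rabs (logcoef q r x) <= r * (1 + Rpower B (q - 1) * B).
Proof.
  intros Hq Hr HB Hx. assert (Hpos : 0 <= 1 + Rpower B (q - 1) * B)
    by (pose proof (exp_pos ((q - 1) * ln B)); unfold Rpower; nra).
  destruct (Req_dec x 0) as [-> | Hx0];
    [unfold logcoef; rewrite Rmult_0_r, Rmult_0_l, Rabs_R0; nra |].
  assert (Hax : 0 < Rabs x) by now apply Rabs_pos_lt.
  rewrite logcoef_nonzero by exact Hx0.
  replace (Rabs (Rpower (Rabs x) (q - 2) * x * (r * ln (Rabs x))))
    with (r * (Rpower (Rabs x) (q - 1) * Rabs (ln (Rabs x)))).
  - apply Rmult_le_compat_l; [exact Hr |]. apply Rpower_mul_Rabs_ln_le; lra.
  - replace (q - 1) with ((q - 2) + 1) by ring. rewrite Rpower_plus, Rpower_1 by exact Hax.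
    rewrite !Rabs_mult, (Rabs_pos_eq r Hr), (Rabs_pos_eq (Rpower _ _)) by (left; apply exp_pos).
    ring.
Qed.

Lemma Rabs_logcoef_mul_le (q r B x y : R) : 2 <= q -> 0 <= r -> 1 <= B ->
  Rabs x <= B -> Rabs y <= B -> Rabs (logcoef q r x * y) <= r * (1 + Rpower B (q - 1) * B) * B.
Proof.
  intros Hq Hr HB Hx Hy. rewrite Rabs_mult.
  apply Rmult_le_compat; [apply Rabs_pos | apply Rabs_pos | now apply logcoef_bound | exact Hy].
Qed.

Lemma is_lim_seq_logcoef_mul (q r B : R) (x y : nat -> R) (l m : R) :
  2 <= q -> 0 <= r -> 1 <= B -> (forall k, Rabs (x k) <= B) ->
  is_lim_seq x l -> is_lim_seq y m -> (l = 0 -> m = 0) ->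
  is_lim_seq (fun k => logcoef q r (x k) * y k) (logcoef q r l * m).
Proof.
  intros Hq Hr HB Hx Hxl Hym Hlm. destruct (Req_dec l 0) as [Hl | Hl].
  - rewrite (Hlm Hl) in Hym |- *. rewrite Rmult_0_r. set (K := r * (1 + Rpower B (q - 1) * B)).
    apply is_lim_seq_abs_0.
    apply (is_lim_seq_le_le (fun _ => 0) _ (fun k => K * Rabs (y k))).
    + intros k. split; [apply Rabs_pos |]. rewrite Rabs_mult.
      apply Rmult_le_compat_r; [apply Rabs_pos | now apply logcoef_bound].
    + apply is_lim_seq_const.
    + replace (Finite 0) with (Rbar_mult K 0) by (simpl; f_equal; ring).
      apply is_lim_seq_scal_l. now apply (is_lim_seq_abs_0 y).
  - assert (Hev : eventually (fun k => x k <> 0)).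
    { apply is_lim_seq_spec in Hxl. destruct (Hxl (mkposreal _ (Rabs_pos_lt l Hl))) as [N HN].
      exists N. intros k Hk Hxk. specialize (HN k Hk). simpl in HN.
      rewrite Hxk, Rminus_0_l, Rabs_Ropp in HN. lra. }
    apply (is_lim_seq_ext_loc
             (fun k => Rpower (Rabs (x k)) (q - 2) * x k * (r * ln (Rabs (x k))) * y k)).
    { destruct Hev as [N HN]. exists N. intros k Hk. now rewrite logcoef_nonzero by now apply HN. }
    rewrite logcoef_nonzero by exact Hl.
    assert (Habs : is_lim_seq (fun k => Rabs (x k)) (Rabs l)) by now apply (is_lim_seq_abs x l).
    assert (Hal : 0 < Rabs l) by now apply Rabs_pos_lt.
    apply is_lim_seq_mult'; [| exact Hym].
    apply is_lim_seq_mult'; [apply is_lim_seq_mult'; [now apply is_lim_seq_Rpower | exact Hxl] |].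
    apply (is_lim_seq_scal_l _ r (ln (Rabs l))). now apply is_lim_seq_ln.
Qed.

(** * The functional on E and Cerami sequences *)

Lemma dI_scal (p q r : R) (a b c u v : Z -> R) (t : R) :
  dI p q r a b c u (fun n => t * v n) = t * dI p q r a b c u v.
Proof.
  unfold dI. rewrite Rmult_minus_distr_l, <- !sumZ_scal.
  f_equal; apply sumZ_ext; intros n; unfold Delta; ring.
Qed.

Lemma dI_le_of_dualnorm (p q r : R) (a b c u v : Z -> R) (eps : R) :
  Rbar_le (Rbar_mult (dualnorm p q r a b c u) (1 + normE p a b u)) eps ->
  inD p q r a b c v -> normE p a b v <= 1 -> Rabs (dI p q r a b c u v) <= eps.
Proof.
  intros H Hv Hv1.
  assert (Hle : Rbar_le (Rabs (dI p q r a b c u v)) (dualnorm p q r a b c u))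
    by (apply Lub_Rbar_correct; now exists v).
  assert (Hn : 0 <= normE p a b u) by apply rpow_nonneg.
  revert H Hle Hn. generalize (dualnorm p q r a b c u), (normE p a b u).
  intros [d | |] nu H Hle Hn; simpl in *.
  - pose proof (Rabs_pos (dI p q r a b c u v)). nra.
  - destruct Rle_dec as [H1 | H1]; [destruct Rle_lt_or_eq_dec |]; simpl in H; lra.
  - contradiction.
Qed.

Section Functional.

Context {p q r : R} {a b c : Z -> R} {m : nat} {b0 : R}.
Hypotheses (Hm : (0 < m)%nat) (Hp : p = INR (2 * m)) (Hpq : p < q) (Hr : 0 <= r)
  (Ha : forall n, 0 < a n) (Hb : forall n, 0 < b n) (Hc : forall n, 0 < c n)
  (Hb0 : 0 < b0) (Hbb : forall n, b0 <= b n) (Hcs : summableZ c).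

(* [normp u] is ‖u‖^p and [logsum u] is Σ c(n) |u(n)|^q ln |u(n)|^r. *)
Local Notation normp u := (sumZ (normE_integrand p a b u)).
Local Notation logsum u := (sumZ (logterm q r c u)).

Let Hp2 : 2 <= p.
Proof. rewrite Hp. replace 2 with (INR 2) by reflexivity. apply le_INR. lia. Qed.

Let Hq : 2 <= q.
Proof. lra. Qed.

Lemma normE_integrand_even (u : Z -> R) (n : Z) :
  normE_integrand p a b u n = a n * Delta u n ^ (2 * m) + b n * u n ^ (2 * m).
Proof. unfold normE_integrand. now rewrite Hp, !rpow_Rabs_even. Qed.

Lemma normE_integrand_nonneg (u : Z -> R) (n : Z) : 0 <= normE_integrand p a b u n.
Proof.
  rewrite normE_integrand_even.
  pose proof (pow_even_nonneg (Delta u n) m). pose proof (pow_even_nonneg (u n) m).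
  pose proof (Ha n). pose proof (Hb n). nra.
Qed.

Lemma normp_nonneg (u : Z -> R) : inE p a b u -> 0 <= normp u.
Proof. intros Hu. apply sumZ_nonneg; [intros; apply normE_integrand_nonneg | exact Hu]. Qed.

Lemma Rabs_le_of_normp_le (u : Z -> R) (M : R) (n : Z) :
  inE p a b u -> normp u <= M -> Rabs (u n) <= 1 + M / b0.
Proof.
  intros Hu HM.
  pose proof (sumZ_term_le _ n (normE_integrand_nonneg u) Hu) as Hn.
  rewrite normE_integrand_even in Hn.
  pose proof (pow_even_nonneg (Delta u n) m). pose proof (pow_even_nonneg (u n) m).
  pose proof (Ha n). pose proof (Hbb n).
  assert (Hpow : u n ^ (2 * m) <= M / b0).
  { apply Rmult_le_reg_l with b0; [exact Hb0 |].
    replace (b0 * (M / b0)) with M by (field; lra). nra. }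
  pose proof (Rabs_le_1_plus_pow (u n) (2 * m) ltac:(lia)) as Habs.
  rewrite pow_even_abs in Habs. lra.
Qed.

Lemma logterm_logcoef (u : Z -> R) (n : Z) :
  logterm q r c u n = c n * (logcoef q r (u n) * u n).
Proof. unfold logterm. rewrite logcoef_mul_self. ring. Qed.

Lemma Rabs_logterm_le (u : Z -> R) (B : R) (n : Z) : 1 <= B -> Rabs (u n) <= B ->
  Rabs (logterm q r c u n) <= r * (1 + Rpower B (q - 1) * B) * B * c n.
Proof.
  intros HB Hu. rewrite logterm_logcoef, Rabs_mult, (Rabs_pos_eq (c n)) by (left; apply Hc).
  rewrite Rmult_comm. apply Rmult_le_compat_r; [left; apply Hc | now apply Rabs_logcoef_mul_le].
Qed.

Lemma inE_inD (u : Z -> R) : inE p a b u -> inD p q r a b c u.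
Proof.
  intros Hu. split; [exact Hu |]. set (B := 1 + normp u / b0).
  assert (HB : 1 <= B).
  { pose proof (normp_nonneg u Hu). assert (0 <= normp u / b0) by (apply Rdiv_le_0_compat; lra).
    unfold B. lra. }
  apply (summableZ_le _ (fun n => r * (1 + Rpower B (q - 1) * B) * B * c n)).
  - intros n. apply Rabs_logterm_le; [exact HB | now apply Rabs_le_of_normp_le].
  - now apply summableZ_scal.
Qed.

Lemma summableZ_pow_q (u : Z -> R) : inE p a b u ->
  summableZ (fun n => c n * rpow (Rabs (u n)) q).
Proof.
  intros Hu. set (B := 1 + normp u / b0).
  apply (summableZ_le _ (fun n => Rpower B q * c n)); [| now apply summableZ_scal].
  intros n. rewrite Rabs_mult, (Rabs_pos_eq (c n)), (Rabs_pos_eq (rpow _ _))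
    by (apply rpow_nonneg || (left; apply Hc)).
  rewrite Rmult_comm. apply Rmult_le_compat_r; [left; apply Hc |].
  destruct (Req_dec (u n) 0) as [-> | Hun]; [rewrite rpow_Rabs_0; left; apply exp_pos |].
  rewrite rpow_pos_eq by now apply Rabs_pos_lt.
  apply Rle_Rpower_l; [lra | split; [now apply Rabs_pos_lt | now apply Rabs_le_of_normp_le]].
Qed.

Lemma Ifun_normp (u : Z -> R) : inE p a b u ->
  Ifun p q r a b c u = / p * normp u + r / (q * q) * sumZ (fun n => c n * rpow (Rabs (u n)) q)
                       - / q * logsum u.
Proof.
  intros Hu. unfold Ifun, normE.
  rewrite rpow_rpow_inv; [reflexivity | lra | now apply normp_nonneg].
Qed.

Lemma dI_diag (u : Z -> R) : dI p q r a b c u u = normp u - logsum u.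
Proof.
  unfold dI. f_equal; apply sumZ_ext; intros n.
  - rewrite normE_integrand_even, Hp, <- (pow_pred_mul (Delta u n)), <- (pow_pred_mul (u n)) by lia.
    rewrite <- !(rpow_Rabs_even_sub_2 m) by exact Hm. ring.
  - rewrite logterm_logcoef. unfold logcoef. ring.
Qed.

Lemma normE_integrand_scal (u : Z -> R) (t : R) (n : Z) :
  normE_integrand p a b (fun n => t * u n) n = t ^ (2 * m) * normE_integrand p a b u n.
Proof.
  rewrite !normE_integrand_even. unfold Delta.
  replace (t * u (n + 1)%Z - t * u n) with (t * (u (n + 1)%Z - u n)) by ring.
  rewrite !Rpow_mult_distr. ring.
Qed.

Lemma normp_scal (u : Z -> R) (t : R) : normp (fun n => t * u n) = t ^ (2 * m) * normp u.
Proof. rewrite <- sumZ_scal. apply sumZ_ext. intros n. apply normE_integrand_scal. Qed.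

Lemma inE_scal (u : Z -> R) (t : R) : inE p a b u -> inE p a b (fun n => t * u n).
Proof.
  intros Hu. apply (summableZ_ext (fun n => t ^ (2 * m) * normE_integrand p a b u n)).
  - intros n. symmetry. apply normE_integrand_scal.
  - now apply summableZ_scal.
Qed.

Lemma normalized_inD_normE_le_1 (u : Z -> R) : inE p a b u ->
  let t := / (1 + normp u) in
  inD p q r a b c (fun n => t * u n) /\ normE p a b (fun n => t * u n) <= 1.
Proof.
  intros Hu t. pose proof (normp_nonneg u Hu) as Hn.
  assert (Ht : 0 <= t <= 1).
  { unfold t. split; [left; apply Rinv_0_lt_compat; lra |].
    rewrite <- Rinv_1. apply Rinv_le_contravar; lra. }
  split; [now apply inE_inD, inE_scal |].
  unfold normE. rewrite normp_scal. apply rpow_inv_le_1; [lra |].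
  apply Rle_trans with (t * normp u).
  - apply Rmult_le_compat_r; [exact Hn | apply pow_le_self; [exact Ht | lia]].
  - unfold t. apply Rmult_le_reg_l with (1 + normp u); [lra |].
    rewrite <- Rmult_assoc, Rinv_r, Rmult_1_l, Rmult_1_r by lra. lra.
Qed.

Lemma is_lim_seq_normE_integrand (v : nat -> Z -> R) (w : Z -> R) :
  (forall n, is_lim_seq (fun k => v k n) (w n)) ->
  forall n, is_lim_seq (fun k => normE_integrand p a b (v k) n) (normE_integrand p a b w n).
Proof.
  intros Hvw n. rewrite normE_integrand_even.
  apply (is_lim_seq_ext (fun k => a n * Delta (v k) n ^ (2 * m) + b n * v k n ^ (2 * m))).
  { intros k. symmetry. apply normE_integrand_even. }
  apply is_lim_seq_plus'; apply is_lim_seq_mult'; try apply is_lim_seq_const; apply is_lim_seq_pow;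
    [apply is_lim_seq_minus' | ]; apply Hvw.
Qed.

Lemma normE_integrand_sub_le (u w : Z -> R) (n : Z) :
  normE_integrand p a b (fun n => u n - w n) n <=
  2 ^ (2 * m) * (normE_integrand p a b u n + normE_integrand p a b w n).
Proof.
  rewrite !normE_integrand_even. unfold Delta.
  replace (u (n + 1)%Z - w (n + 1)%Z - (u n - w n))
    with ((u (n + 1)%Z - u n) - (w (n + 1)%Z - w n)) by ring.
  pose proof (pow_even_sub_le (u (n + 1)%Z - u n) (w (n + 1)%Z - w n) m).
  pose proof (pow_even_sub_le (u n) (w n) m). pose proof (Ha n). pose proof (Hb n).
  apply Rle_trans with
    (a n * (2 ^ (2 * m) * ((u (n + 1)%Z - u n) ^ (2 * m) + (w (n + 1)%Z - w n) ^ (2 * m))) +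
     b n * (2 ^ (2 * m) * (u n ^ (2 * m) + w n ^ (2 * m)))); [| right; ring].
  apply Rplus_le_compat; apply Rmult_le_compat_l; lra.
Qed.

Lemma inE_sub (u w : Z -> R) : inE p a b u -> inE p a b w -> inE p a b (fun n => u n - w n).
Proof.
  intros Hu Hw.
  apply (summableZ_le _ (fun n => 2 ^ (2 * m) * normE_integrand p a b u n +
                                  2 ^ (2 * m) * normE_integrand p a b w n));
    [| now apply summableZ_lin].
  intros n. rewrite Rabs_pos_eq by apply normE_integrand_nonneg.
  eapply Rle_trans; [apply normE_integrand_sub_le | right; ring].
Qed.

Section PointwiseLimit.

Variables (v : nat -> Z -> R) (w : Z -> R) (M : R).
Hypotheses (Hv : forall k, inE p a b (v k)) (HvM : forall k, normp (v k) <= M)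
  (Hvw : forall n, is_lim_seq (fun k => v k n) (w n)).

Let B := 1 + M / b0.

Let HB : 1 <= B.
Proof.
  pose proof (normp_nonneg _ (Hv O)). pose proof (HvM O).
  assert (0 <= M / b0) by (apply Rdiv_le_0_compat; lra). unfold B. lra.
Qed.

Let Hv_le : forall k n, Rabs (v k n) <= B.
Proof. intros k n. now apply Rabs_le_of_normp_le. Qed.

Lemma Rabs_pointwise_lim_le (n : Z) : Rabs (w n) <= B.
Proof.
  change (Rbar_le (Rabs (w n)) B).
  apply (is_lim_seq_le (fun k => Rabs (v k n)) (fun _ => B)); [intros; apply Hv_le | |
    apply is_lim_seq_const].
  exact (is_lim_seq_abs _ _ (Hvw n)).
Qed.

Lemma inE_pointwise_lim : inE p a b w.
Proof.
  apply (summableZ_of_pointwise_lim (fun k => normE_integrand p a b (v k)) _ M);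
    [intros; apply normE_integrand_nonneg | exact Hv | exact HvM |].
  now apply is_lim_seq_normE_integrand.
Qed.

Lemma is_lim_logsum_pointwise : is_lim_seq (fun k => logsum (v k)) (logsum w).
Proof.
  apply (is_lim_sumZ_dominated _ _ (fun n => r * (1 + Rpower B (q - 1) * B) * B * c n)).
  - intros n. apply (is_lim_seq_ext (fun k => c n * (logcoef q r (v k n) * v k n))).
    { intros k. symmetry. apply logterm_logcoef. }
    rewrite logterm_logcoef. apply (is_lim_seq_scal_l _ (c n) (logcoef q r (w n) * w n)).
    apply (is_lim_seq_logcoef_mul q r B); auto.
  - apply inE_inD, inE_pointwise_lim.
  - now apply summableZ_scal.
  - intros k n. now apply Rabs_logterm_le.
Qed.

Lemma is_lim_dnormp_pointwise : is_lim_seq (fun k => sumZ (fun n =>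
    a n * Delta (v k) n ^ (2 * m - 1) * Delta w n + b n * v k n ^ (2 * m - 1) * w n)) (normp w).
Proof.
  assert (Hw : forall n, normE_integrand p a b w n =
            a n * Delta w n ^ (2 * m - 1) * Delta w n + b n * w n ^ (2 * m - 1) * w n).
  { intros n. rewrite normE_integrand_even, <- (pow_pred_mul (Delta w n)), <- (pow_pred_mul (w n))
      by lia. ring. }
  rewrite (sumZ_ext _ _ Hw). pose proof inE_pointwise_lim as HwE.
  apply (is_lim_sumZ_unif_integrable _ (fun k => normE_integrand p a b (v k)) _
           (normE_integrand p a b w) M);
    [| exact (summableZ_ext _ _ Hw HwE) | intros; apply normE_integrand_nonneg | exact Hv
     | exact HvM
     | intros; apply normE_integrand_nonneg | exact HwE |].
  - intros n. unfold Delta.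
    apply is_lim_seq_plus'; apply is_lim_seq_mult'; try apply is_lim_seq_const;
      apply is_lim_seq_mult'; try apply is_lim_seq_const; apply is_lim_seq_pow;
      try apply is_lim_seq_minus'; apply Hvw.
  - intros d Hd. exists ((/ d) ^ (2 * m - 1)). intros k n.
    rewrite !normE_integrand_even. apply young_pow_pair; try (left; auto); assumption.
Qed.

Lemma is_lim_dlogsum_pointwise :
  is_lim_seq (fun k => sumZ (fun n => c n * (logcoef q r (v k n) * w n))) (logsum w).
Proof.
  rewrite (sumZ_ext _ _ (logterm_logcoef w)).
  apply (is_lim_sumZ_dominated _ _ (fun n => r * (1 + Rpower B (q - 1) * B) * B * c n)).
  - intros n. apply (is_lim_seq_scal_l _ (c n) (logcoef q r (w n) * w n)).
    apply (is_lim_seq_logcoef_mul q r B); auto using is_lim_seq_const.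
  - apply (summableZ_ext (logterm q r c w)); [apply logterm_logcoef |].
    apply inE_inD, inE_pointwise_lim.
  - now apply summableZ_scal.
  - intros k n. rewrite Rabs_mult, (Rabs_pos_eq (c n)), Rmult_comm by (left; apply Hc).
    apply Rmult_le_compat_r; [left; apply Hc |].
    apply Rabs_logcoef_mul_le; auto using Rabs_pointwise_lim_le.
Qed.

Lemma is_lim_dI_pointwise :
  is_lim_seq (fun k => dI p q r a b c (v k) w) (normp w - logsum w).
Proof.
  eapply is_lim_seq_ext;
    [| exact (is_lim_seq_minus' _ _ _ _ is_lim_dnormp_pointwise is_lim_dlogsum_pointwise)].
  intros k. unfold dI. f_equal; apply sumZ_ext; intros n.
  - rewrite Hp, <- !(rpow_Rabs_even_sub_2 m) by exact Hm. ring.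
  - unfold logcoef. ring.
Qed.

Lemma is_lim_normp_sub_pointwise : is_lim_seq (fun k => normp (v k)) (normp w) ->
  is_lim_seq (fun k => normp (fun n => v k n - w n)) 0.
Proof.
  intros Hlim.
  apply (is_lim_sumZ_dominated_by_cvg _ (fun k => normE_integrand p a b (v k))
           (normE_integrand p a b w) (2 ^ (2 * m))).
  - apply pow_le. lra.
  - intros; apply normE_integrand_nonneg.
  - intros; apply normE_integrand_sub_le.
  - exact Hv.
  - exact inE_pointwise_lim.
  - intros n. replace (Finite 0) with (Finite (normE_integrand p a b (fun _ => 0) n))
      by (rewrite normE_integrand_even; unfold Delta; rewrite Rminus_0_r, pow_i by lia;
          f_equal; ring).
    apply is_lim_seq_normE_integrand. intros n'.
    replace (Finite 0) with (Finite (w n' - w n')) by (f_equal; ring).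
    apply is_lim_seq_minus'; [apply Hvw | apply is_lim_seq_const].
  - now apply is_lim_seq_normE_integrand.
  - exact Hlim.
Qed.

End PointwiseLimit.

Section CeramiSequence.

Variables (d0 : R) (uk : nat -> Z -> R).
Hypothesis Hcer : Cerami_seq p q r a b c d0 uk.

Let HuE : forall k, inE p a b (uk k).
Proof. intros k. apply (proj1 Hcer k). Qed.

Lemma cerami_dI_small (eps : R) : 0 < eps -> eventually (fun k =>
  forall v, inD p q r a b c v -> normE p a b v <= 1 -> Rabs (dI p q r a b c (uk k) v) <= eps).
Proof.
  intros Heps. destruct (proj2 (proj2 Hcer) eps Heps) as [N HN].
  exists N. intros k Hk v Hv Hv1. now apply (dI_le_of_dualnorm p q r a b c (uk k) v eps); auto.
Qed.

Lemma cerami_normp_sub_logsum_le (eps : R) : 0 < eps -> eventually (fun k =>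
  Rabs (normp (uk k) - logsum (uk k)) <= eps * (1 + normp (uk k))).
Proof.
  intros Heps. destruct (cerami_dI_small eps Heps) as [N HN]. exists N. intros k Hk.
  destruct (normalized_inD_normE_le_1 (uk k) (HuE k)) as [Hv Hv1].
  specialize (HN k Hk _ Hv Hv1). rewrite dI_scal, dI_diag, Rabs_mult, Rabs_pos_eq in HN.
  2: { left. apply Rinv_0_lt_compat. pose proof (normp_nonneg _ (HuE k)). lra. }
  pose proof (normp_nonneg _ (HuE k)).
  apply Rmult_le_reg_l with (/ (1 + normp (uk k))); [apply Rinv_0_lt_compat; lra |].
  replace (/ (1 + normp (uk k)) * (eps * (1 + normp (uk k)))) with eps by (field; lra).
  exact HN.
Qed.

(* With kap = (1/p - 1/q)/2, the estimate L(u_k) <= ‖u_k‖^p + q kap (1 + ‖u_k‖^p) turns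
   I(u_k) >= ‖u_k‖^p / p - L(u_k) / q into I(u_k) >= kap ‖u_k‖^p - kap. *)
Lemma cerami_normp_bounded : exists M, forall k, normp (uk k) <= M.
Proof.
  set (kap := (/ p - / q) / 2).
  assert (Hkap : 0 < kap).
  { unfold kap. assert (/ q < / p) by (apply Rinv_lt_contravar; nra). lra. }
  destruct (cerami_normp_sub_logsum_le (q * kap)) as [N1 HN1]; [nra |].
  pose proof (proj1 (proj2 Hcer)) as HI. apply is_lim_seq_spec in HI.
  destruct (HI (mkposreal 1 Rlt_0_1)) as [N2 HN2].
  apply (bounded_of_eventually_bounded _ ((d0 + 1 + kap) / kap)). exists (N1 + N2)%nat.
  intros k Hk. specialize (HN1 k ltac:(lia)). specialize (HN2 k ltac:(lia)). simpl in HN2.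
  pose proof (normp_nonneg _ (HuE k)) as Hn.
  rewrite Ifun_normp in HN2 by apply HuE.
  assert (HC : 0 <= r / (q * q) * sumZ (fun n => c n * rpow (Rabs (uk k n)) q)).
  { apply Rmult_le_pos; [apply Rdiv_le_0_compat; nra |].
    apply sumZ_nonneg; [| now apply summableZ_pow_q].
    intros n. apply Rmult_le_pos; [left; apply Hc | apply rpow_nonneg]. }
  apply Rabs_def2 in HN2. apply Rabs_le_between in HN1.
  assert (HL : / q * logsum (uk k) <= / q * (normp (uk k) + q * kap * (1 + normp (uk k))))
    by (apply Rmult_le_compat_l; [left; apply Rinv_0_lt_compat | ]; lra).
  replace (/ q * (normp (uk k) + q * kap * (1 + normp (uk k))))
    with (/ q * normp (uk k) + kap * (1 + normp (uk k))) in HL by (field; lra).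
  apply Rmult_le_reg_l with kap; [exact Hkap |].
  replace (kap * ((d0 + 1 + kap) / kap)) with (d0 + 1 + kap) by (field; lra).
  unfold kap in *. lra.
Qed.

Lemma cerami_normp_sub_logsum_cvg0 (M : R) : (forall k, normp (uk k) <= M) ->
  is_lim_seq (fun k => normp (uk k) - logsum (uk k)) 0.
Proof.
  intros HM. pose proof (normp_nonneg _ (HuE O)). pose proof (HM O).
  apply is_lim_seq_spec. intros [eps Heps]. simpl.
  assert (He : 0 < eps / (2 * (1 + M))) by (apply Rdiv_lt_0_compat; lra).
  destruct (cerami_normp_sub_logsum_le _ He) as [N HN]. exists N. intros k Hk.
  rewrite Rminus_0_r. eapply Rle_lt_trans; [now apply HN |].
  apply Rle_lt_trans with (eps / (2 * (1 + M)) * (1 + M)).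
  - apply Rmult_le_compat_l; [lra |]. specialize (HM k). lra.
  - replace (eps / (2 * (1 + M)) * (1 + M)) with (eps / 2) by (field; lra). lra.
Qed.

Lemma cerami_dI_cvg0 (w : Z -> R) : inE p a b w -> is_lim_seq (fun k => dI p q r a b c (uk k) w) 0.
Proof.
  intros Hw. destruct (normalized_inD_normE_le_1 w Hw) as [Hv Hv1].
  set (t := / (1 + normp w)) in *.
  assert (Ht : 0 < t) by (apply Rinv_0_lt_compat; pose proof (normp_nonneg w Hw); lra).
  apply is_lim_seq_spec. intros [eps Heps]. simpl.
  assert (He : 0 < eps * t / 2) by (apply Rdiv_lt_0_compat; [nra | lra]).
  destruct (cerami_dI_small _ He) as [N HN]. exists N. intros k Hk.
  specialize (HN k Hk _ Hv Hv1). rewrite dI_scal, Rabs_mult, (Rabs_pos_eq t) in HN by lra.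
  rewrite Rminus_0_r. apply Rmult_lt_reg_l with t; [exact Ht |]. nra.
Qed.

Lemma cerami_subseq_strong_cvg (M : R) (phi : nat -> nat) (w : Z -> R) :
  (forall k, normp (uk k) <= M) -> strictly_increasing phi ->
  (forall n, is_lim_seq (fun k => uk (phi k) n) (w n)) ->
  inD p q r a b c w /\ is_lim_seq (fun k => normE p a b (fun n => uk (phi k) n - w n)) 0.
Proof.
  intros HM Hphi Hw. set (v := fun k => uk (phi k)).
  assert (Hv : forall k, inE p a b (v k)) by (intros; apply HuE).
  assert (HvM : forall k, normp (v k) <= M) by (intros; apply HM).
  assert (Hsub : forall x l, is_lim_seq x l -> is_lim_seq (fun k => x (phi k)) l)
    by (intros x l; apply is_lim_seq_subseq, eventually_subseq, Hphi).
  pose proof (inE_pointwise_lim v w M Hv HvM Hw) as HwE.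
  assert (Hbal : normp w = logsum w).
  { pose proof (is_lim_dI_pointwise v w M Hv HvM Hw) as H1.
    pose proof (Hsub _ _ (cerami_dI_cvg0 w HwE)) as H2.
    unfold v in H1. apply is_lim_seq_unique in H1, H2. rewrite H2 in H1. injection H1. lra. }
  assert (Hnormp : is_lim_seq (fun k => normp (v k)) (normp w)).
  { apply (is_lim_seq_ext (fun k => (normp (v k) - logsum (v k)) + logsum (v k))); [intros; ring |].
    replace (normp w) with (0 + logsum w) by lra. apply is_lim_seq_plus'.
    - exact (Hsub _ _ (cerami_normp_sub_logsum_cvg0 M HM)).
    - exact (is_lim_logsum_pointwise v w M Hv HvM Hw). }
  split; [now apply inE_inD |].
  apply (is_lim_seq_rpow_inv_0 _ p); [lra | intros; apply normp_nonneg, inE_sub; auto |].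
  exact (is_lim_normp_sub_pointwise v w M Hv HvM Hw Hnormp).
Qed.

End CeramiSequence.
End Functional.

Theorem lemma4p2 (p q r : R) (a b c : Z -> R)
  (Hp : 1 < p) (Hpq : p < q) (Hp2 : exists m : nat, (0 < m)%nat /\ p / 2 = INR m)
  (Hr : 1 <= r)
  (Ha : forall n, 0 < a n) (Hb : forall n, 0 < b n) (Hc : forall n, 0 < c n)
  (HC1 : cond_C1 b) (HC2 : cond_C2 c)
  (d0 : R) (Hd0 : 0 < d0) (uk : nat -> Z -> R)
  (Hcer : Cerami_seq p q r a b c d0 uk) :
  exists phi : nat -> nat, (forall k, (phi k < phi (S k))%nat) /\
  exists w : Z -> R, inD p q r a b c w /\
    is_lim_seq (fun k => normE p a b (fun n => uk (phi k) n - w n)) 0.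
Proof.
  destruct Hp2 as [m [Hm Hm2]].
  assert (Hp_even : p = INR (2 * m)) by (rewrite mult_INR; simpl; lra).
  assert (Hr0 : 0 <= r) by lra.
  destruct HC1 as [[b0 [Hb0 Hbb]] _]. destruct HC2 as [_ Hcs].
  destruct (cerami_normp_bounded Hm Hp_even Hpq Hr0 Ha Hb Hc Hb0 Hbb Hcs d0 uk Hcer) as [M HM].
  destruct (pointwise_cvg_subseq uk (1 + M / b0)) as [phi [w [Hphi Hw]]].
  { intros k n. apply (Rabs_le_of_normp_le Hm Hp_even Ha Hb Hb0 Hbb); [apply Hcer | apply HM]. }
  exists phi. split; [exact Hphi |]. exists w.
  exact (cerami_subseq_strong_cvg Hm Hp_even Hpq Hr0 Ha Hb Hc Hb0 Hbb Hcs d0 uk Hcer M phi w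
           HM Hphi Hw).
Qed.
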